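(* Let $x, y \in \mathbb{R}^n$ with $y \ge 0$, and let $q \colon \mathbb{R}^n \times \mathbb{R}^n \to \mathbb{R}$ be defined by $q(x,y) := |x|^T y = \sum_{i=1}^n |x_i|\, y_i$. Then a vector $v \in \mathbb{R}^{2n}$ belongs to the limiting subdifferential $\partial q(x,y)$ if and only if $$v = \begin{pmatrix} y \circ s \\ |x| \end{pmatrix} \quad\text{for some } s \in \mathbb{R}^n \text{ with } s_i \in \begin{cases} \{1\}, & x_i > 0,\\ [-1,1], & x_i = 0,\\ \{-1\}, & x_i<0,\end{cases} \quad i=1,\dots,n.$$
   Context: $|x| := (|x_1|,\dots,|x_n|)^T$ and $\circ$ denotes the componentwise (Hadamard) product. For a nonempty closed set $Z$, the Fréchet normal cone at $z \in Z$ is the polar of the Bouligand tangent cone $T_Z(z)=\{d : \exists d^k\to d,\ t_k \searrow 0,\ z+t_kd^k \in Z\}$, and the limiting normal cone $N^{\lim}_Z(z)$ is the set of $v$ for which there exist $z^k \to z$ in $Z$ and $v^k \to v$ with $v^k$ in the Fréchet normal cone at $z^k$. For a lower semicontinuous function $h$, the limiting subdifferential is $\partial h(w) := \{ s : (s,-1) \in N^{\lim}_{\mathrm{epi}(h)}((w,h(w)))\}$. *)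

From HB Require Import structures.
From mathcomp Require Import all_boot all_order all_algebra.
From mathcomp Require Import all_classical all_reals all_analysis.
Set Implicit Arguments. Unset Strict Implicit. Unset Printing Implicit Defensive.
Import Order.TTheory GRing.Theory Num.Theory.
Import numFieldNormedType.Exports.
Local Open Scope classical_set_scope.
Local Open Scope ring_scope.

Definition dotv (R : realType) (p : nat) (u v : 'rV[R]_p) : R :=
  \sum_(i < p) u 0 i * v 0 i.

Definition tangent_cone (R : realType) (p : nat) (Z : set 'rV[R]_p)
  (z : 'rV[R]_p) : set 'rV[R]_p :=
  [set d | exists (dk : nat -> 'rV[R]_p) (tk : nat -> R),
      dk @ \oo --> d /\ tk @ \oo --> (0 : R) /\
      (forall k, 0 < tk k) /\ (forall k, tk k.+1 <= tk k) /\
      (forall k, Z (z + tk k *: dk k))].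

Definition frechet_normal_cone (R : realType) (p : nat) (Z : set 'rV[R]_p)
  (z : 'rV[R]_p) : set 'rV[R]_p :=
  [set v | forall d, tangent_cone Z z d -> dotv v d <= 0].

Definition limiting_normal_cone (R : realType) (p : nat) (Z : set 'rV[R]_p)
  (z : 'rV[R]_p) : set 'rV[R]_p :=
  [set v | exists (zk vk : nat -> 'rV[R]_p),
      zk @ \oo --> z /\ vk @ \oo --> v /\
      (forall k, Z (zk k)) /\ (forall k, frechet_normal_cone Z (zk k) (vk k))].

(* epigraph of h : R^m -> R, as a subset of R^(m+1) = R^m x R *)
Definition epigraph (R : realType) (m : nat) (h : 'rV[R]_m -> R) : set 'rV[R]_(m + 1) :=
  [set z | h (lsubmx z) <= rsubmx z 0 0].

Definition limiting_subdiff (R : realType) (m : nat) (h : 'rV[R]_m -> R)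
  (w : 'rV[R]_m) : set 'rV[R]_m :=
  [set s | limiting_normal_cone (epigraph h) (row_mx w (const_mx (h w)))
             (row_mx s (const_mx (-1)))].

Definition qfun (R : realType) (n : nat) (w : 'rV[R]_(n + n)) : R :=
  \sum_(i < n) `|lsubmx w 0 i| * rsubmx w 0 i.

From HB Require Import structures.
From mathcomp Require Import all_boot all_order all_algebra.
From mathcomp Require Import all_classical all_reals all_analysis.
From mathcomp Require Import lra.
Set Implicit Arguments.
Unset Strict Implicit.
Unset Printing Implicit Defensive.

Import Order.TTheory GRing.Theory Num.Theory.
Import numFieldNormedType.Exports.
Local Open Scope classical_set_scope.
Local Open Scope ring_scope.

(* Testing the Frechet normal cone of the epigraph at any of its points
   against short segments along the coordinate axes, on which q is affine,
   pins a Frechet normal (g, rho) down coordinatewise: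
   g_(n+i) = - rho |x_i|, g_i = - rho sg(x_i) y_i when x_i <> 0, and
   |g_i| <= |rho| |y_i| in general.  These relations survive the limit
   rho -> -1, which gives one inclusion.  Conversely, for y >= 0 and s_i a
   subgradient of |.| at x_i, the elementary estimate
     |X + tA| (Y + tB) >= |X| Y + t (Y s A + |X| B) - t^2 |A| |B|
   shows that (y o s, |x|, -1) is already a Frechet normal at (x, y, q(x, y)),
   so constant sequences witness the other inclusion. *)

Section RealFacts.
Variable R : realDomainType.
Implicit Types a s t A B X Y : R.

Lemma abs_subgradient_iff a s :
  (0 < a -> s = 1) /\ (a = 0 -> -1 <= s <= 1) /\ (a < 0 -> s = -1) <->
  s * a = `|a| /\ `|s| <= 1.
Proof.
rewrite ler_norml; split.
  move=> [s_pos [s_0 s_neg]]; case: (ltgtP a 0) => [a_lt0|a_gt0|a0].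
  - by rewrite s_neg // mulN1r ltr0_norm //; split=> //; lra.
  - by rewrite s_pos // mul1r gtr0_norm //; split=> //; lra.
  - by rewrite a0 mulr0 normr0; split=> //; apply: s_0.
case=> sa s_range; split=> [a_gt0|]; last split=> [_ //|a_lt0].
- by apply: (mulIf (lt0r_neq0 a_gt0)); rewrite sa mul1r gtr0_norm.
- by apply: (mulIf (ltr0_neq0 a_lt0)); rewrite sa mulN1r ltr0_norm.
Qed.

Lemma normrD_sg X t : `|t| <= `|X| -> `|X + t| = `|X| + Num.sg X * t.
Proof.
rewrite ler_norml; case: (ltgtP X 0) => [X_lt0|X_gt0|->].
- by rewrite ltr0_sg // ltr0_norm // => t_range; rewrite ler0_norm; lra.
- by rewrite gtr0_sg // gtr0_norm // => t_range; rewrite ger0_norm; lra.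
- rewrite normr0 oppr0 => t_range; have -> : t = 0 by lra.
  by rewrite !(addr0, mulr0, normr0).
Qed.

Lemma abs_mul_lower_bound X Y s A B t :
  0 <= Y -> s * X = `|X| -> `|s| <= 1 -> 0 <= t ->
  `|X| * Y + t * (Y * s * A + `|X| * B) - t ^+ 2 * (`|A| * `|B|)
    <= `|X + t * A| * (Y + t * B).
Proof.
move=> Y_ge0 sX s_le1 t_ge0; set P := `|X + t * A|.
have P_ge : `|X| + t * s * A <= P.
  have -> : `|X| + t * s * A = s * (X + t * A) by rewrite mulrDr sX mulrCA mulrA.
  by apply: le_trans (ler_norm _) _; rewrite normrM ler_piMl.
have P_dist : `|P - `|X| | <= t * `|A|.
  apply: le_trans (ler_dist_dist _ _) _.
  by rewrite addrAC subrr add0r normrM ger0_norm.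
have Y_part : Y * (`|X| + t * s * A) <= Y * P by rewrite ler_wpM2l.
have B_part : - (t * `|B| * (t * `|A|)) <= t * B * (P - `|X|).
  rewrite lerNl; apply: le_trans (ler_norm _) _.
  by rewrite normrN !normrM ger0_norm // (ler_wpM2l _ P_dist) ?mulr_ge0.
move: Y_part B_part; rewrite expr2; lra.
Qed.

End RealFacts.

Section Limits.
Variable R : realType.

Lemma cvg_entry (T : Type) (F : set_system T) {FF : Filter F} p
    (f : T -> 'rV[R]_p) (a : 'rV[R]_p) j :
  f @ F --> a -> (fun k => f k 0 j) @ F --> a 0 j.
Proof. exact: (continuous_cvg _ (@coord_continuous R 1 p 0 j a)). Qed.

Lemma cvg_near_eq_lim (T : Type) (F : set_system T) {FF : ProperFilter F}
    (f g : T -> R) (a b : R) :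
  f @ F --> a -> g @ F --> b -> (\forall k \near F, f k = g k) -> a = b.
Proof.
move=> fa gb fg; have fb : f @ F --> b.
  by apply: cvg_trans gb; apply: near_eq_cvg; apply: filterS fg => k ->.
exact: cvg_unique fa fb.
Qed.

Lemma near_sgr_cvg (T : Type) (F : set_system T) {FF : Filter F}
    (f : T -> R) (a : R) :
  f @ F --> a -> a != 0 -> \forall k \near F, Num.sg (f k) = Num.sg a.
Proof.
move=> fa; case: (ltgtP a 0) => // [a_lt0|a_gt0] _; near=> k.
  by rewrite !ltr0_sg //; near: k; exact: cvgr_lt fa _ a_lt0.
by rewrite !gtr0_sg //; near: k; exact: cvgr_gt fa _ a_gt0.
Unshelve. all: by end_near.
Qed.

End Limits.

Section NormalCones.
Variable R : realType.

Lemma dotv_row_mx m1 m2 (a : 'rV[R]_m1) (b : 'rV[R]_m2) c d :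
  dotv (row_mx a b) (row_mx c d) = dotv a c + dotv b d.
Proof.
rewrite /dotv big_split_ord; congr (_ + _).
  by apply: eq_bigr => i _; rewrite !row_mxEl.
by apply: eq_bigr => i _; rewrite !row_mxEr.
Qed.

Lemma dotv_rV1 (a b : 'rV[R]_1) : dotv a b = a 0 0 * b 0 0.
Proof. by rewrite /dotv big_ord1. Qed.

Lemma dotv_delta p (g : 'rV[R]_p) (a : R) j : dotv g (a *: delta_mx 0 j) = g 0 j * a.
Proof.
rewrite /dotv (bigD1 j) //= big1 ?addr0 => [|k /negbTE kj]; rewrite !mxE ?kj !eqxx.
  by rewrite mulr1.
by rewrite !mulr0.
Qed.

Lemma cvg_dotv (T : Type) (F : set_system T) {FF : Filter F} p (g : 'rV[R]_p)
    (f : T -> 'rV[R]_p) a :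
  f @ F --> a -> (fun k => dotv g (f k)) @ F --> dotv g a.
Proof.
move=> fa; apply: cvg_big => // [|i _]; first exact: add_continuous.
by apply: cvgMl_tmp; apply: cvg_entry.
Qed.

Lemma tangent_cone_segment p (Z : set 'rV[R]_p) z d c :
  0 < c -> (forall t, 0 < t <= c -> Z (z + t *: d)) -> tangent_cone Z z d.
Proof.
move=> c_gt0 segZ; exists (fun=> d), (fun k => c * harmonic k).
have tk_gt0 k : 0 < c * harmonic k by rewrite mulr_gt0 // harmonic_gt0.
split; first exact: cvg_cst.
split; first by rewrite -(mulr0 c); apply: cvgMl_tmp; exact: cvg_harmonic.
split=> //; split=> k.
  by rewrite ler_wpM2l ?ltW //= ltf_pV2 ?posrE ?ltr0n // ltr_nat.
apply: segZ; rewrite tk_gt0 /= ler_pdivrMr ?ltr0n // ler_peMr ?(ltW c_gt0) //.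
by rewrite ler1n.
Qed.

Lemma frechet_normal_segment p (Z : set 'rV[R]_p) z v d c :
  frechet_normal_cone Z z v -> 0 < c ->
  (forall t, 0 < t <= c -> Z (z + t *: d)) -> dotv v d <= 0.
Proof. by move=> vN c_gt0 segZ; apply: vN; exact: tangent_cone_segment c_gt0 segZ. Qed.

Variable m : nat.
Implicit Types (h : 'rV[R]_m -> R) (w g u : 'rV[R]_m) (z : 'rV[R]_(m + 1)).

Lemma epigraph_addZ h z t (D : 'rV[R]_(m + 1)) :
  epigraph h (z + t *: D) =
  (h (lsubmx z + t *: lsubmx D) <= rsubmx z 0 0 + t * rsubmx D 0 0).
Proof.
rewrite /epigraph /=; congr (h _ <= _); last by rewrite !mxE.
by apply/rowP => j; rewrite !mxE.
Qed.

Lemma frechet_normal_epigraph_dir h z v u D c :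
  epigraph h z -> frechet_normal_cone (epigraph h) z v -> 0 < c ->
  (forall t, 0 < t <= c -> h (lsubmx z + t *: u) <= h (lsubmx z) + t * D) ->
  dotv (lsubmx v) u + rsubmx v 0 0 * D <= 0.
Proof.
move=> zE vN c_gt0 hD.
have := frechet_normal_segment (d := row_mx u (const_mx D)) vN c_gt0.
rewrite -{1}[v]hsubmxK dotv_row_mx dotv_rV1 [const_mx D _ _]mxE; apply=> t t_range.
rewrite epigraph_addZ row_mxKl row_mxKr [const_mx D _ _]mxE.
by apply: le_trans (hD t t_range) _; rewrite lerD2r.
Qed.

Lemma frechet_normal_epigraph_of_lower_bound h (C : 'rV[R]_m -> R) w g :
  continuous C ->
  (forall u t, 0 < t -> h w + t * dotv g u - t ^+ 2 * C u <= h (w + t *: u)) ->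
  frechet_normal_cone (epigraph h) (row_mx w (const_mx (h w)))
    (row_mx g (const_mx (-1))).
Proof.
move=> C_cont h_lb d [dk [tk [dk_cvg [tk_cvg [tk_gt0 [_ dkE]]]]]].
have lb k : dotv g (lsubmx (dk k)) - tk k * C (lsubmx (dk k)) <= rsubmx (dk k) 0 0.
  have := dkE k; rewrite epigraph_addZ row_mxKl row_mxKr [const_mx _ _ _]mxE.
  move/(le_trans (h_lb _ _ (tk_gt0 k))) => h_le.
  by rewrite -(ler_pM2l (tk_gt0 k)) mulrBr mulrA -expr2; lra.
have ldk_cvg : lsubmx \o dk @ \oo --> lsubmx d.
  exact: (continuous_cvg _ (@continuous_lsubmx R 1 m 1 d) dk_cvg).
have rdk_cvg : rsubmx \o dk @ \oo --> rsubmx d.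
  exact: (continuous_cvg _ (@continuous_rsubmx R 1 m 1 d) dk_cvg).
have lhs_cvg : (fun k => dotv g (lsubmx (dk k)) - tk k * C (lsubmx (dk k))) @ \oo
    --> dotv g (lsubmx d) - 0 * C (lsubmx d).
  apply: cvgB; first exact: cvg_dotv.
  by apply: cvgM => //; exact: (continuous_cvg _ (C_cont _) ldk_cvg).
have : dotv g (lsubmx d) - 0 * C (lsubmx d) <= rsubmx d 0 0.
  by apply: (ler_cvg_to lhs_cvg (cvg_entry (j := 0) rdk_cvg)); exact: nearW.
rewrite -[d]hsubmxK dotv_row_mx dotv_rV1 row_mxKl row_mxKr [const_mx _ _ _]mxE.
by rewrite mul0r subr0; lra.
Qed.

End NormalCones.

Section Qfun.
Variables (R : realType) (n : nat).
Implicit Types (x y s : 'rV[R]_n) (W : 'rV[R]_(n + n)).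
Local Notation q := (@qfun R n).

Lemma qfunE W : q W = \sum_(i < n) `|W 0 (lshift n i)| * W 0 (rshift n i).
Proof. by apply: eq_bigr => i _; rewrite !mxE. Qed.

Lemma qfun_addl W (a : R) i :
  q (W + a *: delta_mx 0 (lshift n i)) =
  q W + (`|W 0 (lshift n i) + a| - `|W 0 (lshift n i)|) * W 0 (rshift n i).
Proof.
rewrite !qfunE (bigD1 i) // [in RHS](bigD1 i) //= addrAC; congr (_ + _).
  by rewrite !mxE !eqxx eq_rlshift mulr1 mulr0 addr0 mulrBl addrCA subrr addr0.
apply: eq_bigr => k /negbTE ki.
by rewrite !mxE eq_lshift ki eq_rlshift !mulr0 !addr0.
Qed.

Lemma qfun_addr W (a : R) i :
  q (W + a *: delta_mx 0 (rshift n i)) = q W + a * `|W 0 (lshift n i)|.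
Proof.
rewrite !qfunE (bigD1 i) // [in RHS](bigD1 i) //= addrAC; congr (_ + _).
  by rewrite !mxE !eqxx eq_lrshift mulr1 mulr0 addr0 mulrDr [_ * a]mulrC.
apply: eq_bigr => k /negbTE ki.
by rewrite !mxE eq_rshift ki eq_lrshift !mulr0 !addr0.
Qed.

Lemma cvg_qfun_norm (T : Type) (F : set_system T) {FF : Filter F}
    (f : T -> 'rV[R]_(n + n)) a :
  f @ F --> a ->
  (fun k => q (map_mx Num.norm (f k))) @ F --> q (map_mx Num.norm a).
Proof.
move=> fa; rewrite qfunE; under eq_cvg do rewrite qfunE.
apply: cvg_big => // [|i _]; first exact: add_continuous.
rewrite !mxE !normr_id; under eq_cvg do rewrite !mxE !normr_id.
by apply: cvgM; apply: cvg_norm; apply: cvg_entry.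
Qed.

Lemma continuous_qfun_norm :
  continuous (fun u : 'rV[R]_(n + n) => q (map_mx Num.norm u)).
Proof. by move=> u; exact: (@cvg_qfun_norm _ (nbhs u) _ id u cvg_id). Qed.

Lemma qfun_lower_bound x y s u t :
  (forall i, 0 <= y 0 i) ->
  (forall i, s 0 i * x 0 i = `|x 0 i| /\ `|s 0 i| <= 1) -> 0 <= t ->
  q (row_mx x y) + t * dotv (row_mx (\row_i (y 0 i * s 0 i)) (\row_i `|x 0 i|)) u
    - t ^+ 2 * q (map_mx Num.norm u)
  <= q (row_mx x y + t *: u).
Proof.
move=> y_ge0 hs t_ge0.
rewrite -[u]hsubmxK scale_row_mx add_row_mx map_row_mx !qfunE /dotv big_split_ord /=.
rewrite mulrDr !mulr_sumr -!big_split -sumrB /=; apply: ler_sum => i _.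
have [sx s_le1] := hs i.
rewrite !(row_mxEl, row_mxEr) !mxE normr_id -mulrDr.
exact: abs_mul_lower_bound.
Qed.

Lemma qfun_limiting_subdiff x y s :
  (forall i, 0 <= y 0 i) ->
  (forall i, s 0 i * x 0 i = `|x 0 i| /\ `|s 0 i| <= 1) ->
  limiting_subdiff q (row_mx x y)
    (row_mx (\row_i (y 0 i * s 0 i)) (\row_i `|x 0 i|)).
Proof.
move=> y_ge0 hs; exists (fun=> row_mx (row_mx x y) (const_mx (q (row_mx x y)))).
exists (fun=> row_mx (row_mx (\row_i (y 0 i * s 0 i)) (\row_i `|x 0 i|)) (const_mx (-1))).
do 2 (split; first exact: cvg_cst).
split=> k; first by rewrite /epigraph /= row_mxKl row_mxKr mxE.
apply: frechet_normal_epigraph_of_lower_bound continuous_qfun_norm _ => u t t_gt0.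
exact: qfun_lower_bound (ltW t_gt0).
Qed.

Lemma frechet_normal_qfun_entry z v i :
  epigraph q z -> frechet_normal_cone (epigraph q) z v ->
  [/\ lsubmx v 0 (rshift n i) = - rsubmx v 0 0 * `|lsubmx z 0 (lshift n i)|,
      lsubmx z 0 (lshift n i) != 0 ->
        lsubmx v 0 (lshift n i) =
        - rsubmx v 0 0 * (Num.sg (lsubmx z 0 (lshift n i)) * lsubmx z 0 (rshift n i)) &
      `|lsubmx v 0 (lshift n i)| <= `|rsubmx v 0 0| * `|lsubmx z 0 (rshift n i)| ].
Proof.
move=> zE vN.
set X := lsubmx z 0 (lshift n i); set Y := lsubmx z 0 (rshift n i).
set rho := rsubmx v 0 0; set gl := lsubmx v 0 (lshift n i).
have dir j a D c : 0 < c ->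
    (forall t, 0 < t <= c ->
       q (lsubmx z + t *: (a *: delta_mx 0 j)) <= q (lsubmx z) + t * D) ->
    lsubmx v 0 j * a + rho * D <= 0.
  by move=> c_gt0 hD; rewrite -dotv_delta; exact: frechet_normal_epigraph_dir zE vN c_gt0 hD.
have dir_r a : lsubmx v 0 (rshift n i) * a + rho * (a * `|X|) <= 0.
  by apply: (dir _ _ _ 1 ltr01) => t _; rewrite scalerA qfun_addr mulrA.
have dir_l a D c : 0 < c -> (forall t, 0 < t <= c -> `|X + t * a| - `|X| = t * D) ->
    gl * a + rho * (D * Y) <= 0.
  move=> c_gt0 hD; apply: (dir _ _ _ c c_gt0) => t t_range.
  by rewrite scalerA qfun_addl hD // mulrA.
have dir_l0 a : X = 0 -> gl * a + rho * (`|a| * Y) <= 0.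
  move=> X0; apply: (dir_l _ _ 1 ltr01) => t /andP[t_gt0 _].
  by rewrite X0 add0r normr0 subr0 normrM gtr0_norm.
have dir_lsg a : `|a| <= 1 -> X != 0 -> gl * a + rho * (Num.sg X * a * Y) <= 0.
  move=> a_le1 X_neq0; apply: (dir_l _ _ `|X|); first by rewrite normr_gt0.
  move=> t /andP[t_gt0 t_le].
  have ta_le : `|t * a| <= `|X|.
    by rewrite normrM gtr0_norm //; apply: le_trans t_le; rewrite ler_piMr // ltW.
  by rewrite normrD_sg // addrC addKr mulrCA.
have gl_sg : X != 0 -> gl = - rho * (Num.sg X * Y).
  move=> X_neq0; have := dir_lsg 1; have := dir_lsg (-1).
  by rewrite normrN normr1 lexx => /(_ isT X_neq0) h1 /(_ isT X_neq0) h2; lra.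
split=> //; first by have := dir_r 1; have := dir_r (-1); lra.
have [X0|X_neq0] := eqVneq X 0; last first.
  by rewrite gl_sg // !normrM normrN normr_sg X_neq0 mul1r.
have := dir_l0 1 X0; have := dir_l0 (-1) X0; rewrite normrN normr1 => h1 h2.
rewrite -normrM; apply: (@le_trans _ _ (- (rho * Y))); last by rewrite -normrN ler_norm.
by rewrite ler_norml; lra.
Qed.

Lemma limiting_subdiff_qfun_entry x y v i :
  limiting_subdiff q (row_mx x y) v ->
  [/\ v 0 (rshift n i) = `|x 0 i|,
      x 0 i != 0 -> v 0 (lshift n i) = Num.sg (x 0 i) * y 0 i &
      `|v 0 (lshift n i)| <= `|y 0 i| ].
Proof.
case=> zk [vk [zk_cvg [vk_cvg [zkE vkN]]]].
have := continuous_cvg eventually_filter (@continuous_lsubmx R 1 _ 1 _) zk_cvg.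
rewrite row_mxKl => W_cvg.
have := continuous_cvg eventually_filter (@continuous_lsubmx R 1 _ 1 _) vk_cvg.
rewrite row_mxKl => g_cvg.
have := continuous_cvg eventually_filter (@continuous_rsubmx R 1 _ 1 _) vk_cvg.
move=> /(cvg_entry (j := 0)); rewrite row_mxKr mxE => rho_cvg.
have /(cvg_entry (j := lshift n i)) := W_cvg; rewrite row_mxEl => X_cvg.
have /(cvg_entry (j := rshift n i)) := W_cvg; rewrite row_mxEr => Y_cvg.
have /(cvg_entry (j := lshift n i)) gl_cvg := g_cvg.
have /(cvg_entry (j := rshift n i)) gr_cvg := g_cvg.
have entry k := frechet_normal_qfun_entry i (zkE k) (vkN k).
split.
- have := cvg_near_eq_lim gr_cvg (cvgM (cvgN rho_cvg) (cvg_norm X_cvg)).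
  rewrite opprK mul1r; apply; apply: nearW => k.
  by case: (entry k).
- move=> x_neq0.
  have := cvg_near_eq_lim gl_cvg (cvgM (cvgN rho_cvg) (cvgMl_tmp (a := Num.sg (x 0 i)) Y_cvg)).
  rewrite opprK mul1r; apply; apply: filterS (near_sgr_cvg X_cvg x_neq0) => k sgE.
  have Xk_neq0 : lsubmx (zk k) 0 (lshift n i) != 0 by rewrite -sgr_eq0 sgE sgr_eq0.
  by case: (entry k) => _ -> //; rewrite sgE.
- have := ler_cvg_to (cvg_norm gl_cvg) (cvgM (cvg_norm rho_cvg) (cvg_norm Y_cvg)).
  rewrite normrN normr1 mul1r; apply; apply: nearW => k.
  by case: (entry k).
Qed.

Lemma limiting_subdiff_qfun_sub x y v :
  (forall i, 0 <= y 0 i) -> limiting_subdiff q (row_mx x y) v ->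
  exists2 s : 'rV[R]_n,
    forall i, s 0 i * x 0 i = `|x 0 i| /\ `|s 0 i| <= 1 &
    v = row_mx (\row_i (y 0 i * s 0 i)) (\row_i `|x 0 i|).
Proof.
move=> y_ge0 vD; have vE i := limiting_subdiff_qfun_entry i vD.
(* When x_i = y_i = 0, also v_i = 0 and the junk value v_i / 0 = 0 is a valid s_i. *)
exists (\row_i if x 0 i == 0 then v 0 (lshift n i) / y 0 i else Num.sg (x 0 i)).
  move=> i; rewrite mxE; have [x0|x_neq0] := eqVneq (x 0 i) 0; last first.
    by rewrite -normrEsg normr_sg x_neq0.
  rewrite x0 mulr0 normr0; split=> //.
  have [_ _] := vE i; rewrite normrM normfV (ger0_norm (y_ge0 i)) => vl_le.
  have [->|y_neq0] := eqVneq (y 0 i) 0; first by rewrite invr0 mulr0 ler01.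
  by rewrite ler_pdivrMr ?mul1r // lt0r y_neq0 y_ge0.
rewrite -[LHS]hsubmxK; congr row_mx; apply/rowP => i; rewrite !mxE;
  have [vr vsg vl_le] := vE i; last exact: vr.
have [x0|x_neq0] := eqVneq (x 0 i) 0; last by rewrite vsg // mulrC.
have [y0|y_neq0] := eqVneq (y 0 i) 0; last by rewrite mulrC divfK.
by move: vl_le; rewrite y0 normr0 normr_le0 mul0r => /eqP.
Qed.

End Qfun.

Theorem mainTheorem1 (R : realType) (n : nat) (x y : 'rV[R]_n)
  (hy : forall i, 0 <= y 0 i) (v : 'rV[R]_(n + n)) :
  limiting_subdiff (@qfun R n) (row_mx x y) v <->
  exists s : 'rV[R]_n,
    (forall i, (0 < x 0 i -> s 0 i = 1) /\
               (x 0 i = 0 -> -1 <= s 0 i <= 1) /\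
               (x 0 i < 0 -> s 0 i = -1)) /\
    v = row_mx (\row_i (y 0 i * s 0 i)) (\row_i `|x 0 i|).
Proof.
split=> [/(limiting_subdiff_qfun_sub hy) [s hs ->] | [s [hs ->]]].
  by exists s; split=> // i; apply/abs_subgradient_iff.
by apply: qfun_limiting_subdiff => // i; apply/abs_subgradient_iff.
Qed.
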